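(* $\mathcal{E}_0\neq\mathcal{E}_1$ and $\mathcal{E}_1=\mathcal{E}_\infty$. Consequently $\mathcal{E}_d=\mathcal{E}_1$ for all $d\ge 1$.
   Context: Fix an infinite set $\mathcal{A}$ (of actions) and a finite non-empty set $T$ (of types). A typed temporal graph is a triple $(G,t,\tau)$ where $G$ is a directed graph with node set $\mathrm{nodes}(G)\subseteq\mathcal{A}$ and edge set $\mathrm{edges}(G)\subseteq\mathrm{nodes}(G)\times\mathrm{nodes}(G)$ (no rootedness or acyclicity assumed), $t\colon\mathrm{nodes}(G)\to\mathbb{R}$ and $\tau\colon\mathrm{nodes}(G)\to T$. Write $(G,t,\tau)\preceq(G',t',\tau')$ iff $\mathrm{nodes}(G)\subseteq\mathrm{nodes}(G')$, $\mathrm{edges}(G)\subseteq\mathrm{edges}(G')$, $t'|_{\mathrm{nodes}(G)}=t$ and $\tau'|_{\mathrm{nodes}(G)}=\tau$. Let $\mathcal{G}$ be the set of all finite sequences $(G_k)_{k=0}^n$ ($n\ge 0$) of typed temporal graphs $(G_k,t_k,\tau_k)$. A typed temporal graph is $\mathcal{A}$-trivial iff its node set is $\{r\}$ for some $r\in\mathcal{A}$ and it has no edges. Direct emission: $G'$ is obtained from $G$ by direct emissions iff $G\preceq G'$ and there exist a finite non-empty set $B\subseteq\mathcal{A}$ with $B\cap\mathrm{nodes}(G)=\emptyset$ and $p\in\mathrm{nodes}(G)$ such that $\mathrm{nodes}(G')=\mathrm{nodes}(G)\cup B$, $\mathrm{edges}(G')=\mathrm{edges}(G)\cup\{(p,b):b\in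 B\}$, and $t(p)<t'(b)$ for all $b\in B$. Invocation: for $\mathcal{E}\subseteq\mathcal{G}$, $G'$ is obtained from $G$ by $\mathcal{E}$-invocation iff there exist $p\in\mathrm{nodes}(G)$, a sequence $(H_i,t^H_i,\tau^H_i)_{i=0}^m\in\mathcal{E}$ with $\mathrm{nodes}(H_i)\cap\mathrm{nodes}(G)=\emptyset$ for all $i$, and a node $q_m\in\mathrm{nodes}(H_m)$ of in-degree zero in $H_m$, such that $\mathrm{nodes}(G')=\mathrm{nodes}(G)\cup\mathrm{nodes}(H_m)$, $\mathrm{edges}(G')=\mathrm{edges}(G)\cup\mathrm{edges}(H_m)\cup\{(p,q_m)\}$, $t'=t\sqcup t^H_m$, $\tau'=\tau\sqcup\tau^H_m$, and $t(p)<t^H_m(q_m)$ (here $f\sqcup g$ denotes the common extension of two maps with disjoint domains). Define $\varphi(\mathcal{E})$, for $\mathcal{E}\subseteq\mathcal{G}$, as the set of all $(G_k)_{k=0}^n\in\mathcal{G}$ such that $G_0$ is $\mathcal{A}$-trivial and, for each $0\le k<n$, $G_{k+1}$ is obtained from $G_k$ either by direct emissions or by $\mathcal{E}$-invocation. Define $\mathcal{E}_0=\varphi(\emptyset)$, $\mathcal{E}_{d+1}=\varphi(\mathcal{E}_d)$ for $d\in\mathbb{N}$, and $\mathcal{E}_\infty=\bigcup_{d\in\mathbb{N}}\mathcal{E}_d$. *)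

From Stdlib Require Import Reals List.
Open Scope R_scope.

Section Defs.
Variables (A T : Type).

(* Nodes and edges are subsets of A and
   A x A; [time] and [typ] are total functions whose values outside the node
   set are irrelevant (no definition below looks at them). *)
Record TTG := mkTTG {
  nodes : A -> Prop;
  edges : A -> A -> Prop;
  time : A -> R;
  typ : A -> T;
  edges_wf : forall x y, edges x y -> nodes x /\ nodes y
}.

(* finite non-empty sequences (G_0, ..., G_n): head G_0 and the tail list *)
Definition Gseq := (TTG * list TTG)%type.

Definition seq_elems (s : Gseq) : list TTG := fst s :: snd s.
Definition seq_last (s : Gseq) : TTG := last (snd s) (fst s).

Definition preceq (G G' : TTG) : Prop :=
  (forall x, nodes G x -> nodes G' x) /\
  (forall x y, edges G x y -> edges G' x y) /\
  (forall x, nodes G x -> time G' x = time G x /\ typ G' x = typ G x).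

Definition A_trivial (G : TTG) : Prop :=
  exists r : A, (forall x, nodes G x <-> x = r) /\ (forall x y, ~ edges G x y).

Definition finite_nonempty (B : A -> Prop) : Prop :=
  exists l : list A, l <> nil /\ forall x, B x <-> In x l.

Definition direct_emission (G G' : TTG) : Prop :=
  preceq G G' /\
  exists (B : A -> Prop) (p : A),
    finite_nonempty B /\
    (forall b, B b -> ~ nodes G b) /\
    nodes G p /\
    (forall x, nodes G' x <-> nodes G x \/ B x) /\
    (forall x y, edges G' x y <-> edges G x y \/ (x = p /\ B y)) /\
    (forall b, B b -> time G p < time G' b).

Definition invocation (E : Gseq -> Prop) (G G' : TTG) : Prop :=
  exists (p : A) (s : Gseq) (q : A),
    nodes G p /\ E s /\
    (forall H, In H (seq_elems s) -> forall x, nodes H x -> ~ nodes G x) /\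
    nodes (seq_last s) q /\ (forall x, ~ edges (seq_last s) x q) /\
    (forall x, nodes G' x <-> nodes G x \/ nodes (seq_last s) x) /\
    (forall x y, edges G' x y <->
        edges G x y \/ edges (seq_last s) x y \/ (x = p /\ y = q)) /\
    (forall x, nodes G x -> time G' x = time G x /\ typ G' x = typ G x) /\
    (forall x, nodes (seq_last s) x ->
        time G' x = time (seq_last s) x /\ typ G' x = typ (seq_last s) x) /\
    time G p < time (seq_last s) q.

Fixpoint chain (Rel : TTG -> TTG -> Prop) (x : TTG) (l : list TTG) : Prop :=
  match l with
  | nil => True
  | y :: l' => Rel x y /\ chain Rel y l'
  end.

Definition phi (E : Gseq -> Prop) (s : Gseq) : Prop :=
  A_trivial (fst s) /\
  chain (fun G G' => direct_emission G G' \/ invocation E G G') (fst s) (snd s).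

Fixpoint Ed (d : nat) : Gseq -> Prop :=
  match d with
  | O => phi (fun _ => False)
  | S d' => phi (Ed d')
  end.

Definition Einf (s : Gseq) : Prop := exists d : nat, Ed d s.

End Defs.

From Stdlib Require Import Reals List Lra.
From Stdlib Require Import Classical ClassicalEpsilon FunctionalExtensionality PropExtensionality.

(* A sequence in [Ed 0] is a chain of direct emissions from a single root, and in it the only
   parentless node is that root; so an invocation of an [Ed 0] sequence attaches its root [q]
   below the caller [p]. Such an invocation can be inlined: grafting each graph of the invoked
   sequence below [p] turns it into direct emissions, first of [q] from [p], then of every
   emission of the invoked sequence, which keeps its parent. Hence the last graph of an [Ed 1]
   sequence is (up to the labels of non-nodes) the last graph of an [Ed 0] sequence lying inside
   it, invoking [Ed 1] is no stronger than invoking [Ed 0], and by induction every [Ed d] is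
   contained in [Ed 1]. Conversely the path [r -> r' -> b] arises from [r] by one invocation, but
   not by one direct emission, whose new edges all share their source. *)

Lemma last_cons {X : Type} (a d : X) l : last (a :: l) d = last l a.
Proof.
  revert a d; induction l as [|b l IH]; intros a d; [reflexivity|].
  change (last (b :: l) d = last (b :: l) a). now rewrite !IH.
Qed.

Lemma last_app {X : Type} (l1 l2 : list X) d : last (l1 ++ l2) d = last l2 (last l1 d).
Proof.
  revert d; induction l1 as [|a l1 IH]; intros d; [reflexivity|].
  change (last (a :: (l1 ++ l2)) d = last l2 (last (a :: l1) d)).
  rewrite !last_cons. apply IH.
Qed.

Lemma last_map {X Y : Type} (f : X -> Y) l d : last (map f l) (f d) = f (last l d).
Proof.
  revert d; induction l as [|a l IH]; intros d; [reflexivity|].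
  change (last (f a :: map f l) (f d) = f (last (a :: l) d)).
  rewrite !last_cons. apply IH.
Qed.

Lemma In_last {X : Type} (x : X) l : In (last l x) (x :: l).
Proof.
  revert x; induction l as [|a l IH]; intros x; [now left|].
  rewrite last_cons. right. apply IH.
Qed.

Lemma exists_fresh (X : Type) :
  ~ (exists l : list X, forall x, In x l) -> forall l : list X, exists x, ~ In x l.
Proof.
  intros hinf l. apply NNPP. intros hall. apply hinf. exists l.
  intros x. apply NNPP. intros hx. apply hall. now exists x.
Qed.

Section Emissions.
Variables (A T : Type).
Arguments nodes {A T} _ _.
Arguments edges {A T} _ _ _.
Arguments time {A T} _ _.
Arguments typ {A T} _ _.
Arguments edges_wf {A T} _ _ _ _.
Arguments mkTTG {A T} _ _ _ _ _.
Arguments preceq {A T} _ _.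
Arguments A_trivial {A T} _.
Arguments direct_emission {A T} _ _.
Arguments invocation {A T} _ _ _.
Arguments chain {A T} _ _ _.
Arguments phi {A T} _ _.
Arguments seq_last {A T} _.
Arguments seq_elems {A T} _.

Lemma preceq_refl (G : TTG A T) : preceq G G.
Proof. unfold preceq; firstorder. Qed.

Lemma preceq_trans (G1 G2 G3 : TTG A T) : preceq G1 G2 -> preceq G2 G3 -> preceq G1 G3.
Proof.
  intros (n12 & e12 & l12) (n23 & e23 & l23). split; [|split]; auto.
  intros x hx. destruct (l12 x hx), (l23 x (n12 x hx)). split; congruence.
Qed.

Lemma chain_app (Rel : TTG A T -> TTG A T -> Prop) x l1 l2 :
  chain Rel x (l1 ++ l2) <-> chain Rel x l1 /\ chain Rel (last l1 x) l2.
Proof.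
  revert x; induction l1 as [|a l1 IH]; intros x; [simpl; tauto|].
  change (chain Rel x (a :: (l1 ++ l2)) <->
          chain Rel x (a :: l1) /\ chain Rel (last (a :: l1) x) l2).
  rewrite last_cons. simpl. rewrite IH. tauto.
Qed.

Lemma chain_mono (R1 R2 : TTG A T -> TTG A T -> Prop) x l :
  (forall G G', R1 G G' -> R2 G G') -> chain R1 x l -> chain R2 x l.
Proof. intros H; revert x; induction l; simpl; firstorder. Qed.

Lemma chain_preceq_last (Rel : TTG A T -> TTG A T -> Prop) x l :
  (forall G G', Rel G G' -> preceq G G') -> chain Rel x l ->
  forall G, In G (x :: l) -> preceq G (last l x).
Proof.
  intros HR; revert x; induction l as [|a l IH]; intros x hc G hG;
    [destruct hG as [<-|[]]; apply preceq_refl|].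
  destruct hc as [hxa hc]. rewrite last_cons. destruct hG as [<-|hG]; [|now apply IH].
  apply preceq_trans with a; [now apply HR | apply IH; [exact hc | now left]].
Qed.

Lemma invocation_mono (E E' : Gseq A T -> Prop) G G' :
  (forall s, E s -> E' s) -> invocation E G G' -> invocation E' G G'.
Proof. intros hE (p & s & q & hp & hs & rest). exists p, s, q. auto. Qed.

Lemma phi_mono (E E' : Gseq A T -> Prop) s :
  (forall G G', invocation E G G' -> invocation E' G G') -> phi E s -> phi E' s.
Proof.
  intros hE [htriv hc]. split; [exact htriv|]. revert hc; apply chain_mono.
  intros G G' [h|h]; [now left | right; now apply hE].
Qed.

Lemma invocation_empty G G' : ~ invocation (fun _ : Gseq A T => False) G G'.
Proof. now intros (_ & _ & _ & _ & [] & _). Qed.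

Lemma Ed0_emission_chain s :
  Ed A T 0 s -> A_trivial (fst s) /\ chain direct_emission (fst s) (snd s).
Proof.
  intros [htriv hc]. split; [exact htriv|]. revert hc; apply chain_mono.
  intros G G' [h|h]; [exact h | now apply invocation_empty in h].
Qed.

Lemma direct_emission_same_source (G G' : TTG A T) x y x' y' :
  direct_emission G G' -> ~ edges G x y -> edges G' x y -> ~ edges G x' y' -> edges G' x' y' ->
  x = x'.
Proof.
  intros [_ (B & p & _ & _ & _ & _ & hE & _)] hxy hxy' hx'y' hx'y''.
  apply hE in hxy', hx'y''. destruct hxy' as [?|[-> _]]; [contradiction|].
  destruct hx'y'' as [?|[-> _]]; [contradiction | reflexivity].
Qed.

Definition rooted_at (r : A) (G : TTG A T) : Prop :=
  forall y, nodes G y -> y = r \/ exists z, edges G z y.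

Lemma direct_emission_rooted r G G' :
  direct_emission G G' -> rooted_at r G -> rooted_at r G'.
Proof.
  intros [(_ & hEE & _) (B & p & _ & _ & _ & hN & hE & _)] hr y hy.
  apply hN in hy as [hy|hy].
  - destruct (hr y hy) as [->|[z hz]]; [now left | right; exists z; auto].
  - right. exists p. apply hE. auto.
Qed.

Lemma chain_emission_rooted r G l :
  chain direct_emission G l -> rooted_at r G -> rooted_at r (last l G).
Proof.
  revert G; induction l as [|G' l IH]; intros G hc hr; [exact hr|].
  destruct hc as [hGG' hc]. rewrite last_cons.
  apply IH; [exact hc | now apply direct_emission_rooted with G].
Qed.

Lemma Ed0_parentless_root s q :
  Ed A T 0 s -> nodes (seq_last s) q -> (forall x, ~ edges (seq_last s) x q) ->
  (forall x, nodes (fst s) x <-> x = q) /\ (forall x y, ~ edges (fst s) x y).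
Proof.
  intros hs hq hq0. destruct (Ed0_emission_chain s hs) as [(r & hN & hE) hc].
  destruct s as [G0 l]; unfold seq_last in *; simpl in *.
  destruct (chain_emission_rooted r G0 l hc) with q as [->|[z hz]].
  - intros y hy. left. now apply hN.
  - exact hq.
  - auto.
  - destruct (hq0 z hz).
Qed.

Definition graft_label {X : Type} (L H : TTG A T) (f : TTG A T -> A -> X) (x : A) : X :=
  if excluded_middle_informative (nodes L x) then f L x else f H x.

Lemma graft_label_in {X : Type} L H (f : TTG A T -> A -> X) x :
  nodes L x -> graft_label L H f x = f L x.
Proof. intros h; unfold graft_label; now destruct excluded_middle_informative. Qed.

Lemma graft_label_out {X : Type} L H (f : TTG A T -> A -> X) x :
  ~ nodes L x -> graft_label L H f x = f H x.
Proof. intros h; unfold graft_label; now destruct excluded_middle_informative. Qed.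

(* [L] and [H] joined by the edge [(p, q)], with the labels of [L] on its nodes; the guard on
   that edge only serves to make the edge relation well formed. *)
Definition graft (L H : TTG A T) (p q : A) : TTG A T.
Proof.
  refine (mkTTG (fun x => nodes L x \/ nodes H x)
    (fun x y => edges L x y \/ edges H x y \/ (x = p /\ y = q /\ nodes L p /\ nodes H q))
    (graft_label L H time) (graft_label L H typ) _).
  intros x y [e|[e|(-> & -> & hp & hq)]]; auto.
  - destruct (edges_wf L x y e); auto.
  - destruct (edges_wf H x y e); auto.
Defined.

Lemma graft_preceq L H H' p q :
  preceq H H' -> (forall x, nodes H' x -> ~ nodes L x) -> preceq (graft L H p q) (graft L H' p q).
Proof.
  intros (hN & hE & hl) hdis. split; [|split]; simpl.
  - intros x [h|h]; auto.
  - intros x y [h|[h|(-> & -> & hp & hq)]]; [left | right; left | right; right; repeat split]; auto.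
  - intros x hx. destruct (classic (nodes L x)) as [hL|hL].
    + now rewrite !graft_label_in.
    + rewrite !graft_label_out by exact hL. destruct hx as [?|hx]; [contradiction | auto].
Qed.

Lemma graft_emission L H H' p q :
  direct_emission H H' -> (forall x, nodes H' x -> ~ nodes L x) -> nodes H q ->
  direct_emission (graft L H p q) (graft L H' p q).
Proof.
  intros [hpre (B & p' & hB & hBH & hp' & hN & hE & ht)] hdis hq. split.
  { now apply graft_preceq. }
  assert (hq' : nodes H' q) by now apply hpre.
  exists B, p'. repeat split; simpl.
  - exact hB.
  - intros b hb [h|h]; [ | exact (hBH b hb h)]. apply (hdis b); [apply hN | ]; auto.
  - auto.
  - intros [h|h]; [auto | apply hN in h; tauto].
  - intros [[h|h]|h]; [left | right; apply hN | right; apply hN]; auto.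
  - rewrite hE. intuition auto.
  - rewrite hE. intuition auto.
  - intros b hb. rewrite !graft_label_out; [apply ht | apply hdis, hN | apply hdis, hpre]; auto.
Qed.

Lemma graft_root_emission L H0 p q :
  (forall x, nodes H0 x <-> x = q) -> (forall x y, ~ edges H0 x y) -> ~ nodes L q ->
  nodes L p -> time L p < time H0 q -> direct_emission L (graft L H0 p q).
Proof.
  intros hN0 hE0 hqL hp ht.
  assert (hq : nodes H0 q) by now apply hN0.
  split; [split; [|split] | exists (nodes H0), p; repeat split]; simpl.
  - auto.
  - auto.
  - intros x hx. now rewrite !graft_label_in.
  - exists (q :: nil). split; [discriminate|]. intros x. rewrite hN0. simpl. intuition auto.
  - intros b hb. apply hN0 in hb. now subst.
  - exact hp.
  - tauto.
  - tauto.
  - intros [h|[h|(-> & -> & _)]]; [auto | destruct (hE0 _ _ h) | auto].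
  - intros [h|(-> & h)]; [auto | right; right; rewrite hN0 in h; subst; auto].
  - intros b hb. apply hN0 in hb. subst b.
    now rewrite graft_label_out.
Qed.

Lemma graft_emission_chain L H l p q :
  chain direct_emission H l -> nodes H q ->
  (forall H', In H' (H :: l) -> forall x, nodes H' x -> ~ nodes L x) ->
  chain direct_emission (graft L H p q) (map (fun H' => graft L H' p q) l).
Proof.
  revert H; induction l as [|H' l IH]; intros H hc hq hdis; [exact I|].
  destruct hc as [hHH' hc]. split.
  - apply graft_emission; [exact hHH' | apply hdis; simpl | exact hq]; auto.
  - apply IH; [exact hc | now apply hHH' | intros G hG; apply hdis; now right].
Qed.

(* Labels outside the node set are irrelevant, so graphs are compared on their nodes only. *)
Definition same_ttg (G1 G2 : TTG A T) : Prop :=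
  (forall x, nodes G1 x <-> nodes G2 x) /\ (forall x y, edges G1 x y <-> edges G2 x y) /\
  (forall x, nodes G1 x -> time G1 x = time G2 x /\ typ G1 x = typ G2 x).

Lemma same_ttg_refl G : same_ttg G G.
Proof. unfold same_ttg; firstorder. Qed.

Lemma direct_emission_same_ttg_l L X Y :
  same_ttg L X -> direct_emission X Y -> direct_emission L Y.
Proof.
  intros (sN & sE & sl) [(pN & pE & pl) (B & p & hB & hBX & hp & hN & hE & ht)].
  split; [split; [|split] | exists B, p; repeat split].
  - intros x h. now apply pN, sN.
  - intros x y h. now apply pE, sE.
  - intros x h. destruct (sl x h), (pl x (proj1 (sN x) h)). split; congruence.
  - exact hB.
  - intros b hb h. now apply (hBX b hb), sN.
  - now apply sN.
  - rewrite hN, sN. tauto.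
  - rewrite hN, sN. tauto.
  - rewrite hE, sE. tauto.
  - rewrite hE, sE. tauto.
  - intros b hb. destruct (sl p (proj2 (sN p) hp)) as [-> _]. now apply ht.
Qed.

(* [X] is, up to [same_ttg], the last graph of an [Ed 0] sequence whose graphs all lie inside
   [X]; the second condition keeps the sequence disjoint from whatever [X] is disjoint from. *)
Definition emission_realizable (X : TTG A T) : Prop :=
  exists s, Ed A T 0 s /\ same_ttg (seq_last s) X /\
    forall G, In G (seq_elems s) -> forall x, nodes G x -> nodes X x.

Lemma A_trivial_realizable X : A_trivial X -> emission_realizable X.
Proof.
  intros h. exists (X, nil). split; [split; [exact h | exact I] | split].
  - apply same_ttg_refl.
  - now intros G [<-|[]].
Qed.

Lemma direct_emission_realizable X Y :
  emission_realizable X -> direct_emission X Y -> emission_realizable Y.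
Proof.
  intros ([S0 ls] & [htriv hc] & hsame & hsub) hXY.
  exists (S0, ls ++ Y :: nil). split; [split; [exact htriv|] | split].
  - apply chain_app. split; [exact hc|]. split; [|exact I].
    left. now apply direct_emission_same_ttg_l with X.
  - unfold seq_last; simpl. rewrite last_app. apply same_ttg_refl.
  - intros G hG x hx. change (In G ((S0 :: ls) ++ Y :: nil)) in hG.
    apply in_app_or in hG as [hG|[<-|[]]]; [ | exact hx].
    apply hXY. exact (hsub G hG x hx).
Qed.

Lemma invocation_realizable X Y :
  emission_realizable X -> invocation (Ed A T 0) X Y -> emission_realizable Y.
Proof.
  intros ([S0 ls] & [htriv hc] & (sN & sE & sl) & hsub).
  intros (p & [H0 lH] & q & hp & hsH & hdis & hq & hq0 & hN & hE & hlX & hlH & ht).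
  destruct (Ed0_parentless_root _ q hsH hq hq0) as [hN0 hE0].
  destruct (Ed0_emission_chain _ hsH) as [_ hcH].
  unfold seq_last, seq_elems in *; simpl in *.
  set (L := last ls S0) in *. set (Hm := last lH H0) in *.
  assert (hdisL : forall H, In H (H0 :: lH) -> forall x, nodes H x -> ~ nodes L x)
    by (intros H hH x hx hL; now apply (hdis H hH x hx), sN).
  assert (hpre : forall H, In H (H0 :: lH) -> preceq H Hm)
    by (apply chain_preceq_last with direct_emission; [now intros ? ? [] | exact hcH]).
  assert (hpL : nodes L p) by now apply sN.
  assert (hqH0 : nodes H0 q) by now apply hN0.
  set (g := fun H => graft L H p q).
  exists (S0, ls ++ map g (H0 :: lH)). split; [split; [exact htriv|] | split].
  - apply chain_app. split; [exact hc|]. fold L.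
    apply chain_mono with direct_emission; [now left|]. split.
    + apply graft_root_emission; [exact hN0 | exact hE0 | | exact hpL |].
      { apply (hdisL H0); [now left | exact hqH0]. }
      destruct (sl p hpL) as [-> _]. destruct (hpre H0 (or_introl eq_refl)) as (_ & _ & hl0).
      destruct (hl0 q hqH0) as [<- _]. exact ht.
    + now apply graft_emission_chain.
  - unfold seq_last; simpl. rewrite last_app. change (last lH H0) with Hm.
    rewrite last_cons. rewrite (last_map g). split; [|split]; simpl.
    + intros x. rewrite hN, sN. tauto.
    + intros x y. rewrite hE, sE. intuition (subst; auto).
    + intros x hx. destruct (classic (nodes L x)) as [hL|hL].
      * rewrite !graft_label_in by exact hL. destruct (sl x hL), (hlX x (proj1 (sN x) hL)).
        split; congruence.
      * rewrite !graft_label_out by exact hL. destruct hx as [?|hx]; [contradiction|].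
        destruct (hlH x hx). split; symmetry; assumption.
  - intros G hG x hx. change (In G ((S0 :: ls) ++ map g (H0 :: lH))) in hG.
    apply in_app_or in hG as [hG|hG]; apply hN; [left; exact (hsub G hG x hx) |].
    apply in_map_iff in hG as (H & <- & hH). destruct hx as [hx|hx]; [left; now apply sN|].
    right. now apply (hpre H hH).
Qed.

Lemma chain_realizable G l :
  emission_realizable G ->
  chain (fun G G' => direct_emission G G' \/ invocation (Ed A T 0) G G') G l ->
  emission_realizable (last l G).
Proof.
  revert G; induction l as [|G' l IH]; intros G hG hc; [exact hG|].
  destruct hc as [hstep hc]. rewrite last_cons. apply IH; [|exact hc].
  destruct hstep as [h|h].
  - now apply direct_emission_realizable with G.
  - now apply invocation_realizable with G.
Qed.

Lemma Ed1_last_realizable s : Ed A T 1 s -> emission_realizable (seq_last s).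
Proof. intros [htriv hc]. apply chain_realizable; [now apply A_trivial_realizable | exact hc]. Qed.

Lemma invocation_Ed1_Ed0 X Y : invocation (Ed A T 1) X Y -> invocation (Ed A T 0) X Y.
Proof.
  intros (p & s & q & hp & hs & hdis & hq & hq0 & hN & hE & hlX & hlH & ht).
  destruct (Ed1_last_realizable s hs) as (s' & hs' & (sN & sE & sl) & hsub).
  exists p, s', q.
  refine (conj hp (conj hs' (conj _ (conj _ (conj _ (conj _ (conj _ (conj hlX (conj _ _))))))))).
  - intros H hH x hx. apply (hdis (seq_last s)); [apply In_last | exact (hsub H hH x hx)].
  - now apply sN.
  - intros x h. now apply (hq0 x), sE.
  - intros x. rewrite hN, sN. tauto.
  - intros x y. rewrite hE, sE. tauto.
  - intros x hx. destruct (sl x hx), (hlH x (proj1 (sN x) hx)). split; congruence.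
  - destruct (sl q (proj2 (sN q) hq)) as [-> _]. exact ht.
Qed.

Lemma Ed_le_1 d s : Ed A T d s -> Ed A T 1 s.
Proof.
  revert s; induction d as [|d IH]; intros s h.
  - apply phi_mono with (fun _ => False); [|exact h].
    intros ? ? hinv. now apply invocation_empty in hinv.
  - apply phi_mono with (Ed A T 1); [exact invocation_Ed1_Ed0 |].
    apply phi_mono with (Ed A T d); [|exact h].
    intros G G'. apply invocation_mono, IH.
Qed.

Lemma Ed_0_le d s : Ed A T 0 s -> Ed A T d s.
Proof.
  destruct d as [|d]; [trivial|]. intros h.
  apply phi_mono with (fun _ => False); [|exact h].
  intros ? ? hinv. now apply invocation_empty in hinv.
Qed.

Lemma Ed_1_le d s : (1 <= d)%nat -> Ed A T 1 s -> Ed A T d s.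
Proof.
  destruct d as [|d]; [now intros h; inversion h |]. intros _ h.
  apply phi_mono with (Ed A T 0); [|exact h].
  intros G G'. apply invocation_mono, Ed_0_le.
Qed.

Section Path.
Variables (r r' b : A) (t0 : T).
Hypotheses (hr'r : r' <> r) (hbr : b <> r) (hbr' : b <> r').

Definition path_time (x : A) : R :=
  if excluded_middle_informative (x = b) then 2
  else if excluded_middle_informative (x = r') then 1 else 0.

Lemma path_time_increasing : path_time r < path_time r' /\ path_time r' < path_time b.
Proof.
  unfold path_time.
  repeat destruct excluded_middle_informative; try congruence; lra.
Qed.

Definition point (x : A) : TTG A T :=
  mkTTG (fun y => y = x) (fun _ _ => False) path_time (fun _ => t0)
    (fun _ _ e => match e with end).

Definition edge_graph : TTG A T.
Proof.
  refine (mkTTG (fun x => x = r' \/ x = b) (fun x y => x = r' /\ y = b)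
    path_time (fun _ => t0) _).
  intros x y [-> ->]. auto.
Defined.

Definition path_graph : TTG A T.
Proof.
  refine (mkTTG (fun x => x = r \/ x = r' \/ x = b)
    (fun x y => (x = r /\ y = r') \/ (x = r' /\ y = b)) path_time (fun _ => t0) _).
  intros x y [[-> ->]|[-> ->]]; auto.
Defined.

Lemma point_A_trivial x : A_trivial (point x).
Proof. exists x. split; [reflexivity | now intros ? ?]. Qed.

Lemma edge_graph_emission : direct_emission (point r') edge_graph.
Proof.
  split; [split; [|split]; simpl; [auto | intros ? ? [] | auto] |].
  exists (fun x => x = b), r'.
  refine (conj _ (conj _ (conj eq_refl (conj _ (conj _ _))))); simpl.
  - exists (b :: nil). split; [discriminate|]. simpl. intuition auto.
  - now intros x -> ->.
  - tauto.
  - tauto.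
  - intros x ->. apply path_time_increasing.
Qed.

Lemma path_graph_invocation : invocation (Ed A T 0) (point r) path_graph.
Proof.
  exists r, (point r', edge_graph :: nil), r'. repeat split; simpl.
  - apply point_A_trivial.
  - left. exact edge_graph_emission.
  - intros H [<-|[<-|[]]] x; simpl; intuition congruence.
  - now left.
  - intros x [_ e]. congruence.
  - tauto.
  - tauto.
  - tauto.
  - intuition congruence.
  - apply path_time_increasing.
Qed.

Lemma path_in_Ed1 : Ed A T 1 (point r, path_graph :: nil).
Proof.
  split; [apply point_A_trivial|]. split; [|exact I].
  right. exact path_graph_invocation.
Qed.

(* The two edges of the path have different sources, so no single direct emission creates both. *)
Lemma path_notin_Ed0 : ~ Ed A T 0 (point r, path_graph :: nil).
Proof.
  intros [_ [hstep _]]. destruct hstep as [h|h]; [|exact (invocation_empty _ _ h)].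
  apply hr'r. symmetry.
  apply (direct_emission_same_source _ _ r r' r' b h); simpl; tauto.
Qed.

End Path.
End Emissions.

Theorem mainTheorem7 (A T : Type)
  (A_infinite : ~ exists l : list A, forall a : A, In a l)
  (T_finite : exists l : list T, forall x : T, In x l)
  (T_nonempty : inhabited T) :
  Ed A T 0 <> Ed A T 1 /\
  Ed A T 1 = Einf A T /\
  (forall d : nat, (1 <= d)%nat -> Ed A T d = Ed A T 1).
Proof.
  destruct T_nonempty as [t0].
  destruct (exists_fresh A A_infinite nil) as [r _].
  destruct (exists_fresh A A_infinite (r :: nil)) as [r' hr'].
  destruct (exists_fresh A A_infinite (r :: r' :: nil)) as [b hb].
  assert (hr'r : r' <> r) by (intros e; apply hr'; now left).
  assert (hbr : b <> r) by (intros e; apply hb; now left).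
  assert (hbr' : b <> r') by (intros e; apply hb; right; now left).
  split; [|split].
  - intros hEd. apply (path_notin_Ed0 A T r r' b t0 hr'r).
    rewrite hEd. now apply path_in_Ed1.
  - extensionality s. apply propositional_extensionality. split.
    + now exists 1%nat.
    + intros [d h]. now apply Ed_le_1 with d.
  - intros d hd. extensionality s. apply propositional_extensionality.
    split; [apply Ed_le_1 | now apply Ed_1_le].
Qed.
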